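(* Let $S$ be an infinite semigroup and $\mu$ a left fairly invariant finitely-additive probability measure on $S$. If $S$ has a left zero $z$ (i.e. $zx=z$ for all $x\in S$), then $\mu(F)=0$ for every finite $F\subseteq S$. Similarly, if $\mu$ is right fairly invariant and $S$ has a right zero $z$ ($xz=z$ for all $x$), then $\mu(F)=0$ for every finite $F\subseteq S$.
   Context: For $s\in S$, $A\subseteq S$: $s$ acts injectively on the left (right) of $A$ if $a\mapsto sa$ ($a\mapsto as$) is injective on $A$. A finitely-additive probability measure is $\mu:\mathcal P(S)\to[0,1]$, $\mu(S)=1$, additive on disjoint sets. $\mu$ is left fairly invariant if $\mu(sA)=\mu(A)$ whenever $s$ acts injectively on the left of $A$; right fairly invariant if $\mu(As)=\mu(A)$ whenever $s$ acts injectively on the right of $A$. *)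

From Stdlib Require Import Reals List.
Open Scope R_scope.

(* Subsets of S are predicates S -> Prop (the full power set P(S)). *)
Definition finite_set {S : Type} (A : S -> Prop) : Prop :=
  exists l : list S, forall x, A x <-> In x l.

Definition infinite_type (S : Type) : Prop := ~ finite_set (fun _ : S => True).

Definition associative {S : Type} (op : S -> S -> S) : Prop :=
  forall x y z, op x (op y z) = op (op x y) z.

Definition fa_prob_measure {S : Type} (mu : (S -> Prop) -> R) : Prop :=
  (forall A, 0 <= mu A <= 1) /\
  mu (fun _ => True) = 1 /\
  (forall A B, (forall x, A x -> B x -> False) ->
     mu (fun x => A x \/ B x) = mu A + mu B).

Definition left_image {S : Type} (op : S -> S -> S) (s : S) (A : S -> Prop) : S -> Prop :=
  fun y => exists a, A a /\ y = op s a.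
Definition right_image {S : Type} (op : S -> S -> S) (A : S -> Prop) (s : S) : S -> Prop :=
  fun y => exists a, A a /\ y = op a s.

Definition acts_inj_left {S : Type} (op : S -> S -> S) (s : S) (A : S -> Prop) : Prop :=
  forall a b, A a -> A b -> op s a = op s b -> a = b.
Definition acts_inj_right {S : Type} (op : S -> S -> S) (s : S) (A : S -> Prop) : Prop :=
  forall a b, A a -> A b -> op a s = op b s -> a = b.

Definition left_fairly_invariant {S : Type} (op : S -> S -> S) (mu : (S -> Prop) -> R) : Prop :=
  forall s A, acts_inj_left op s A -> mu (left_image op s A) = mu A.
Definition right_fairly_invariant {S : Type} (op : S -> S -> S) (mu : (S -> Prop) -> R) : Prop :=
  forall s A, acts_inj_right op s A -> mu (right_image op A s) = mu A.

From Stdlib Require Import Reals List Lra Classical FunctionalExtensionality PropExtensionality.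
Open Scope R_scope.

(* If z is a left zero, then z acts injectively on every
   singleton {y} and maps it onto {z}; left fair invariance therefore gives
   every singleton the same measure c = mu {z}.  In an infinite type there
   are n distinct points for every n, so finite additivity yields n * c <= 1
   for all n, which forces c = 0 by the Archimedean property; hence every
   finite set, a finite disjoint union of singletons, is null.  The right
   zero case is the left zero case for the opposite operation, since right
   translation by s is left translation by s for  fun x y => op y x. *)

Section FiniteAdditivity.

Variable S : Type.
Variable mu : (S -> Prop) -> R.
Hypothesis Hmu : fa_prob_measure mu.

Lemma mu_ext (A B : S -> Prop) : (forall x, A x <-> B x) -> mu A = mu B.
Proof.
  intros HAB. f_equal. extensionality x.
  apply propositional_extensionality. apply HAB.
Qed.

(* The empty set is null: it is disjoint from itself. *)
Lemma mu_empty : mu (fun _ => False) = 0.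
Proof.
  destruct Hmu as [_ [_ Hadd]].
  pose proof (Hadd (fun _ => False) (fun _ => False) (fun _ Hx _ => Hx)) as Hself.
  cbv beta in Hself.
  rewrite (mu_ext (fun x => False \/ False) (fun _ => False)) in Hself by tauto.
  lra.
Qed.

Lemma mu_nodup_list (c : R) :
  (forall y, mu (fun x => x = y) = c) ->
  forall l : list S, NoDup l -> mu (fun x => In x l) = INR (length l) * c.
Proof.
  intros Hsingle l Hl. induction Hl as [|a l Ha _ IH].
  - rewrite (mu_ext _ (fun _ => False)) by (simpl; tauto).
    rewrite mu_empty. simpl. ring.
  - destruct Hmu as [_ [_ Hadd]].
    rewrite (mu_ext _ (fun x => x = a \/ In x l)) by (simpl; intuition).
    rewrite Hadd by (intros x -> Hx; contradiction).
    rewrite Hsingle, IH. simpl length. rewrite S_INR. ring.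
Qed.

End FiniteAdditivity.

Lemma infinite_nodup_lists (S : Type) :
  infinite_type S -> forall n, exists l : list S, NoDup l /\ length l = n.
Proof.
  intros Hinf n. induction n as [|n [l [Hl Hlen]]].
  - exists nil. split; [constructor | reflexivity].
  - destruct (classic (exists x, ~ In x l)) as [[x Hx] | Hcovered].
    + exists (x :: l). split; [constructor; assumption | simpl; congruence].
    + exfalso. apply Hinf. exists l. intros x. split; [|tauto].
      intros _. apply NNPP. intros Hx. apply Hcovered. exists x. exact Hx.
Qed.

Lemma finite_set_nodup (S : Type) (F : S -> Prop) :
  finite_set F -> exists l, NoDup l /\ forall x, F x <-> In x l.
Proof.
  intros [l HF].
  enough (Hdedup : exists l', NoDup l' /\ forall x, In x l <-> In x l').
  { destruct Hdedup as [l' [Hl' Hsame]]. exists l'. split; [exact Hl'|].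
    intros x. rewrite HF. apply Hsame. }
  clear HF. induction l as [|a l [l' [Hl' Hsame]]].
  - exists nil. split; [constructor | simpl; tauto].
  - destruct (classic (In a l')) as [Ha | Ha].
    + exists l'. split; [exact Hl'|]. intros x. simpl. rewrite Hsame.
      split; [intros [<- | Hx] |]; auto.
    + exists (a :: l'). split; [constructor; assumption|].
      intros x. simpl. rewrite Hsame. tauto.
Qed.

Lemma archimedean_zero (c : R) : 0 <= c -> (forall n, INR n * c <= 1) -> c = 0.
Proof.
  intros Hc Hbound. destruct (Rle_lt_or_eq_dec 0 c Hc) as [Hpos | Hzero]; [|auto].
  exfalso. destruct (INR_unbounded (/ c)) as [n Hn].
  specialize (Hbound n).
  assert (Hbig : INR n * c > / c * c) by (apply Rmult_gt_compat_r; assumption).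
  rewrite Rinv_l in Hbig by lra. lra.
Qed.

Lemma uniform_singletons_finite_null (S : Type) (mu : (S -> Prop) -> R) (c : R) :
  infinite_type S -> fa_prob_measure mu -> (forall y, mu (fun x => x = y) = c) ->
  forall F : S -> Prop, finite_set F -> mu F = 0.
Proof.
  intros Hinf Hmu Hsingle F HF.
  assert (Hbound : forall n, INR n * c <= 1).
  { intros n. destruct (infinite_nodup_lists S Hinf n) as [l [Hl Hlen]].
    rewrite <- Hlen, <- (mu_nodup_list S mu Hmu c Hsingle l Hl). apply Hmu. }
  assert (Hc : c = 0).
  { apply archimedean_zero; [|exact Hbound].
    destruct (infinite_nodup_lists S Hinf 1) as [[|y l] [_ Hlen]]; [discriminate|].
    rewrite <- (Hsingle y). apply Hmu. }
  destruct (finite_set_nodup S F HF) as [l [Hl HFl]].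
  rewrite (mu_ext S mu F (fun x => In x l) HFl).
  rewrite (mu_nodup_list S mu Hmu c Hsingle l Hl), Hc. ring.
Qed.

(* A left zero z maps each singleton {y} injectively onto {z}, so under a
   left fairly invariant measure every singleton has measure mu {z}. *)
Lemma left_zero_uniform_singletons (S : Type) (op : S -> S -> S)
  (mu : (S -> Prop) -> R) (z : S) :
  left_fairly_invariant op mu -> (forall x, op z x = z) ->
  forall y, mu (fun x => x = y) = mu (fun x => x = z).
Proof.
  intros Hinv Hz y. rewrite <- (Hinv z (fun x => x = y)).
  - apply mu_ext. intros x. unfold left_image. split.
    + intros [a [-> ->]]. apply Hz.
    + intros ->. exists y. rewrite Hz. auto.
  - intros a b -> -> _. reflexivity.
Qed.

Lemma left_zero_finite_null (S : Type) (op : S -> S -> S) :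
  infinite_type S ->
  forall mu : (S -> Prop) -> R, fa_prob_measure mu -> left_fairly_invariant op mu ->
  forall z : S, (forall x, op z x = z) ->
  forall F : S -> Prop, finite_set F -> mu F = 0.
Proof.
  intros Hinf mu Hmu Hinv z Hz.
  apply (uniform_singletons_finite_null S mu (mu (fun x => x = z)) Hinf Hmu).
  exact (left_zero_uniform_singletons S op mu z Hinv Hz).
Qed.

Theorem mainTheorem7 (S : Type) (op : S -> S -> S)
  (Hassoc : associative op) (Hinf : infinite_type S) :
  (forall mu : (S -> Prop) -> R, fa_prob_measure mu -> left_fairly_invariant op mu ->
     forall z : S, (forall x, op z x = z) ->
     forall F : S -> Prop, finite_set F -> mu F = 0)
  /\
  (forall mu : (S -> Prop) -> R, fa_prob_measure mu -> right_fairly_invariant op mu ->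
     forall z : S, (forall x, op x z = z) ->
     forall F : S -> Prop, finite_set F -> mu F = 0).
Proof.
  split.
  - exact (left_zero_finite_null S op Hinf).
  - (* Right fair invariance for op is left fair invariance for the opposite
       operation, and a right zero of op is a left zero of the opposite. *)
    exact (left_zero_finite_null S (fun x y => op y x) Hinf).
Qed.
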